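(* Let $G$ be a finite nilpotent group, $f\in\mathrm{Aut}(G)$, $Q=\mathcal{Q}(G,f)$, and let $E$ be a finite connected cover of $Q$. Then $\mathrm{rad}(|E|)=\mathrm{rad}(|Q|)$.
   Context: A quandle is a set $Q$ with a binary operation $*$ such that every left translation $L_x:y\mapsto x*y$ is bijective, $x*(y*z)=(x*y)*(x*z)$ and $x*x=x$; $Q$ is connected if $\langle L_x:x\in Q\rangle$ is transitive. $\mathcal{Q}(G,f)$ is $G$ with $x*y=xf(x^{-1}y)$. A cover of $Q$ is a quandle $E$ with a surjective quandle homomorphism $\pi:E\to Q$ such that $\pi(u)=\pi(v)$ implies $L_u=L_v$ in $E$; it is a connected cover if $E$ is connected. For $n\in\mathbb{N}$, $\mathrm{rad}(n)$ is the product of the distinct primes dividing $n$. *)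

From mathcomp Require Import all_boot all_fingroup all_solvable.
From Stdlib Require Import Relations.
Set Implicit Arguments. Unset Strict Implicit. Unset Printing Implicit Defensive.

(* A quandle structure on a type T given by a binary operation op,
   where op x is the left translation L_x. *)
Definition is_quandle (T : Type) (op : T -> T -> T) : Prop :=
  [/\ (forall x, bijective (op x)),
      (forall x y z, op x (op y z) = op (op x y) (op x z))
    & (forall x, op x x = x)].

(* Connected: the group <L_x : x in T> acts transitively.  Since every L_x is
   a bijection, the orbit of a under this group is the set of elements reachable
   from a by words in the L_x and their inverses, i.e. the equivalence closure
   of the relation u ~ L_x u. *)
Definition quandle_connected (T : Type) (op : T -> T -> T) : Prop :=
  forall a b : T, clos_refl_sym_trans T (fun u v => exists x, op x u = v) a b.

Definition Qop (gT : finGroupType) (f : gT -> gT) (x y : gT) : gT :=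
  (x * f (x^-1 * y))%g.

Definition is_cover (E Q : Type) (opE : E -> E -> E) (opQ : Q -> Q -> Q)
  (pi : E -> Q) : Prop :=
  [/\ is_quandle opE,
      (forall q, exists u, pi u = q),
      (forall u v, pi (opE u v) = opQ (pi u) (pi v))
    & (forall u v, pi u = pi v -> opE u =1 opE v)].

Definition rad (n : nat) : nat := \prod_(p <- primes n) p.

From mathcomp Require Import all_boot all_fingroup all_solvable.
Set Implicit Arguments. Unset Strict Implicit. Unset Printing Implicit Defensive.
Local Open Scope group_scope.

(* The displacement group Dis(E) = <L_v^-1 L_u> of a connected quandle E acts
   transitively on E.  Since pi is a homomorphism onto Q(G,f), each generator
   L_v^-1 L_u lifts a left translation of G, so Dis(E) permutes the fibres of pi
   transitively: all fibres have the same size and |G| divides |E|.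
   Conversely, let p be a prime not dividing |G| and P a Sylow p-subgroup of
   Dis(E).  An element of P lifts a translation by a p-element of G, i.e. the
   identity, so it fixes every fibre; as L_u only depends on pi u, P centralises
   Inn(E).  Being central and Sylow, P has the normal complement O_p'(Dis(E))
   (Schur-Zassenhaus).  Writing u = (ab) v with a in P and b in O_p'(Dis(E))
   gives L_u = L_v^(ab) = L_v^b, so L_v^-1 L_u = [L_v, b] lies in O_p'(Dis(E)).
   Hence Dis(E) is a p'-group, while its order is divisible by |E|. *)

Lemma Sylow_central_mul_pcore (gT : finGroupType) p (G P : {group gT}) :
  p.-Sylow(G) P -> G \subset 'C(P) -> P * 'O_p^'(G) = G.
Proof.
move=> sylP cPG; have [sPG pP _] := and3P sylP.
have nsPG : P <| G by rewrite /normal sPG (subset_trans cPG) ?cent_sub.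
have [Y /complP[tiPY defG]] := splitsP (SchurZassenhaus_split (pHall_Hall sylP) nsPG).
have sYG : Y \subset G by rewrite -defG mulG_subr.
have p'Y : p^'.-group Y.
  have oY : #|Y| = #|G : P|.
    by apply/eqP; rewrite -(eqn_pmul2l (cardG_gt0 P)) Lagrange // -defG TI_cardMg.
  by rewrite /pgroup oY; case/and3P: sylP.
have nsYG : Y <| G.
  rewrite /normal sYG -defG mul_subG ?normG //.
  by rewrite (subset_trans _ (cent_sub Y)) // centsC (subset_trans sYG).
apply/eqP; rewrite eqEsubset mul_subG ?pcore_sub //= -{1}defG mulgS //.
exact: pcore_max.
Qed.

Section QuandleGroups.

Variables (T : finType) (op : T -> T -> T).
Hypothesis quandleT : is_quandle op.

Lemma quandle_inj u : injective (op u).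
Proof. by case: quandleT => bijL _ _; exact: bij_inj. Qed.

Definition lperm u : {perm T} := perm (@quandle_inj u).

Lemma lpermE u x : lperm u x = op u x.
Proof. exact: permE. Qed.

Lemma lpermV_fix u : (lperm u)^-1 u = u.
Proof. by apply: (@perm_inj _ (lperm u)); rewrite permKV lpermE; case: quandleT. Qed.

Definition quandle_aut : {set {perm T}} :=
  [set h : {perm T} | [forall a, forall b, h (op a b) == op (h a) (h b)]].

Lemma quandle_autP (h : {perm T}) :
  reflect (forall a b, h (op a b) = op (h a) (h b)) (h \in quandle_aut).
Proof.
rewrite inE; apply: (iffP forallP) => [H a b | H a]; first exact/eqP/(forallP (H a)).
by apply/forallP => b; rewrite H.
Qed.

Lemma group_set_quandle_aut : group_set quandle_aut.
Proof.
apply/group_setP; split; first by apply/quandle_autP => a b; rewrite !perm1.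
move=> h k /quandle_autP Hh /quandle_autP Hk; apply/quandle_autP => a b.
by rewrite !permM Hh Hk.
Qed.

Canonical quandle_aut_group := Group group_set_quandle_aut.

Lemma lperm_aut u : lperm u \in quandle_aut.
Proof. by apply/quandle_autP => a b; rewrite !lpermE; case: quandleT. Qed.

Lemma lperm_aut_conj h v : h \in quandle_aut -> lperm (h v) = lperm v ^ h.
Proof.
by move/quandle_autP=> Hh; apply/permP => x; rewrite conjgE !permM !lpermE Hh permKV.
Qed.

Definition inn := generated_group [set lperm u | u : T].

Definition dis := generated_group [set (lperm v)^-1 * lperm u | u : T, v : T].

Lemma inn_sub_aut : inn \subset quandle_aut.
Proof. by rewrite gen_subG; apply/subsetP => _ /imsetP[u _ ->]; exact: lperm_aut. Qed.

Lemma dis_sub_inn : dis \subset inn.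
Proof.
rewrite gen_subG; apply/subsetP => _ /imset2P[u v _ _ ->].
by rewrite groupM ?groupV ?mem_gen ?imset_f.
Qed.

Lemma inn_norm_dis : inn \subset 'N(dis).
Proof.
rewrite gen_subG norms_gen //; apply/subsetP => _ /imsetP[w _ ->].
rewrite inE; apply/subsetP => y; rewrite mem_conjg => /imset2P[u v _ _ yE].
rewrite -(conjgKV (lperm w) y) yE conjMg conjVg -!lperm_aut_conj ?lperm_aut //.
exact: imset2_f.
Qed.

Lemma dis_orbit : quandle_connected op -> forall a, orbit 'P dis a = [set: T].
Proof.
move=> connT a; apply/eqP; rewrite eqEsubset subsetT /=; apply/subsetP => b _.
elim: (connT a b) => {a b} [x _ [z <-] | x | x y _ | x y z _ xy _ yz].
- apply/orbitP; exists ((lperm x)^-1 * lperm z); first exact/mem_gen/imset2_f.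
  by rewrite /= apermE permM lpermV_fix lpermE.
- exact: (orbit_refl 'P).
- by rewrite orbit_sym.
- exact: orbit_trans yz xy.
Qed.

Lemma dvdn_card_dis (a : T) : quandle_connected op -> #|T| %| #|dis|.
Proof. by move=> connT; rewrite -cardsT -(dis_orbit connT a) dvdn_orbit. Qed.

Lemma dis_p'group_of_Sylow_cent (p : nat) (P : {group {perm T}}) :
  quandle_connected op -> p.-Sylow(dis) P -> P \subset 'C(inn) -> p^'.-group dis.
Proof.
move=> connT sylP cPinn; set R := 'O_p^'(dis).
have cPdis : dis \subset 'C(P) by rewrite (subset_trans dis_sub_inn) // centsC.
have defdis : P * R = dis := Sylow_central_mul_pcore sylP cPdis.
have nRinn : inn \subset 'N(R) := char_norm_trans (pcore_char _ _) inn_norm_dis.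
apply: pgroupS (pcore_pgroup p^' dis); rewrite gen_subG.
apply/subsetP => _ /imset2P[u v _ _ ->].
have Lv : lperm v \in inn by rewrite mem_gen ?imset_f.
have /orbitP[h hdis <-] : u \in orbit 'P dis v by rewrite dis_orbit ?inE.
have /mulsgP[a b aP bR ->] : h \in P * R by rewrite defdis.
have hA : a * b \in quandle_aut.
  by rewrite (subsetP inn_sub_aut) // (subsetP dis_sub_inn) // -defdis mem_mulg.
rewrite /= apermE lperm_aut_conj // conjgM.
have -> : lperm v ^ a = lperm v.
  by apply/conjg_fixP/commgP/commute_sym; exact: (centsP cPinn) a aP _ Lv.
rewrite conjgE !mulgA -[_ * _ * lperm v]mulgA -conjgE groupM ?memJ_norm ?groupV //.
exact: (subsetP nRinn).
Qed.

End QuandleGroups.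

Section CoversOfGroupQuandles.

Variables (gT : finGroupType) (f : {perm gT}).
Hypothesis autf : f \in Aut [set: gT].
Variables (E : finType) (opE : E -> E -> E) (pi : E -> gT).

Lemma QopE x y : Qop f x y = x * (f x)^-1 * f y.
Proof. by rewrite /Qop -(autmE autf) morphM ?morphV ?inE // mulgA. Qed.

Definition lmul_covering : {set {perm E}} :=
  [set h : {perm E} | [exists g, [forall x, pi (h x) == g * pi x]]].

Lemma lmul_coveringP (h : {perm E}) :
  reflect (exists g, forall x, pi (h x) = g * pi x) (h \in lmul_covering).
Proof.
rewrite inE; apply: (iffP existsP) => -[g Hg]; exists g.
  by move=> x; apply/eqP/(forallP Hg).
by apply/forallP => x; rewrite Hg.
Qed.

Lemma group_set_lmul_covering : group_set lmul_covering.
Proof.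
apply/group_setP; split.
  by apply/lmul_coveringP; exists 1 => x; rewrite perm1 mul1g.
move=> h k /lmul_coveringP[g1 H1] /lmul_coveringP[g2 H2]; apply/lmul_coveringP.
by exists (g2 * g1) => x; rewrite permM H2 H1 mulgA.
Qed.

Canonical lmul_covering_group := Group group_set_lmul_covering.

Lemma lmul_covering_p'_fix (p : nat) (h : {perm E}) g :
    p.-elt h -> p^'.-nat #|gT| -> (forall x, pi (h x) = g * pi x) ->
  forall x, pi (h x) = pi x.
Proof.
move=> p_h p'G Hg x; suff g1 : g = 1 by rewrite Hg g1 mul1g.
have Hexp k : pi ((h ^+ k) x) = g ^+ k * pi x.
  elim: k => [|k IHk]; first by rewrite !expg0 perm1 mul1g.
  by rewrite expgSr permM Hg IHk mulgA -expgS.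
have g_ord : g ^+ #[h] = 1.
  by apply: (@mulIg _ (pi x)); rewrite -Hexp expg_order perm1 mul1g.
apply/eqP; rewrite -order_eq1; apply/eqP/(@pnat_1 p).
  by apply: pnat_dvd p_h; rewrite order_dvdn g_ord.
by apply: pnat_dvd p'G; rewrite -cardsT order_dvdG ?inE.
Qed.

Hypothesis quandleE : is_quandle opE.
Hypothesis piM : forall u v, pi (opE u v) = Qop f (pi u) (pi v).

Lemma dis_sub_lmul_covering : dis quandleE \subset lmul_covering.
Proof.
rewrite gen_subG; apply/subsetP => _ /imset2P[u v _ _ ->]; apply/lmul_coveringP.
exists (pi u * (f (pi u))^-1 * f (pi v) * (pi v)^-1) => x.
rewrite permM -{2}(permKV (lperm quandleE v) x) !lpermE !piM !QopE.
by rewrite !mulgA mulgKV mulgK.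
Qed.

Lemma cover_Sylow_dis_cent (p : nat) (P : {group {perm E}}) :
    (forall u v, pi u = pi v -> opE u =1 opE v) ->
    p^'.-nat #|gT| -> p.-Sylow(dis quandleE) P ->
  P \subset 'C(inn quandleE).
Proof.
move=> piL p'G sylP; have [sPdis pP _] := and3P sylP.
rewrite cent_gen; apply/centsP => h hP _ /imsetP[u _ ->].
have hdis := subsetP sPdis h hP.
have /lmul_coveringP[g Hg] := subsetP dis_sub_lmul_covering h hdis.
have pi_hu : pi (h u) = pi u := lmul_covering_p'_fix (mem_p_elt pP hP) p'G Hg u.
have hA : h \in quandle_aut opE.
  by rewrite (subsetP (inn_sub_aut quandleE)) ?(subsetP (dis_sub_inn quandleE)).
apply/commute_sym/commgP/conjg_fixP; rewrite -lperm_aut_conj //.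
by apply/permP => y; rewrite !lpermE; apply: piL.
Qed.

Hypothesis connE : quandle_connected opE.

Lemma dvdn_card_cover : (forall q, exists u, pi u = q) -> #|gT| %| #|E|.
Proof.
move=> piS; pose fibre q := [set x | pi x == q].
have fibre_le q r : #|fibre q| <= #|fibre r|.
  have [[u <-] [v <-]] := (piS q, piS r).
  have /orbitP[h hdis /= hu] : v \in orbit 'P (dis quandleE) u by rewrite dis_orbit ?inE.
  have /lmul_coveringP[g Hg] := subsetP dis_sub_lmul_covering h hdis.
  rewrite -(card_imset _ (@perm_inj _ h)); apply/subset_leq_card/subsetP => y /imsetP[x].
  by rewrite !inE => /eqP pix ->; rewrite Hg pix -Hg -hu apermE.
have -> : #|E| = \sum_(q : gT) #|fibre q|.
  rewrite -sum1_card (partition_big pi predT) //=; apply: eq_bigr => q _.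
  by rewrite -sum1_card; apply: eq_bigl => x; rewrite inE.
rewrite (eq_bigr (fun=> #|fibre 1|)) ?sum_nat_const ?cardT ?dvdn_mulr //.
by move=> q _; apply/eqP; rewrite eqn_leq !fibre_le.
Qed.

End CoversOfGroupQuandles.

Theorem proposition3p10 (gT : finGroupType) (f : {perm gT})
  (E : finType) (opE : E -> E -> E) (pi : E -> gT) :
  nilpotent [set: gT] ->
  f \in Aut [set: gT] ->
  is_cover opE (Qop f) pi ->
  quandle_connected opE ->
  rad #|E| = rad #|gT|.
Proof.
move=> _ autf [quandleE piS piM piL] connE.
have [e _] := piS 1.
have dvdGE : #|gT| %| #|E| := dvdn_card_cover autf quandleE piM connE piS.
have E_gt0 : 0 < #|E| by apply/card_gt0P; exists e.
have G_gt0 : 0 < #|gT| by apply/card_gt0P; exists 1.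
rewrite /rad; suff -> : primes #|E| = primes #|gT| by [].
apply/eq_primes => p; rewrite !mem_primes E_gt0 G_gt0 /=.
apply/andP/andP => -[p_pr p_dvd]; split=> //; last exact: dvdn_trans p_dvd dvdGE.
apply: contraT; rewrite -p'natE // => p'G.
have [P sylP] := Sylow_exists p (dis quandleE).
have := cover_Sylow_dis_cent autf piM piL p'G sylP.
move/(dis_p'group_of_Sylow_cent connE sylP)/(pnat_dvd (dvdn_card_dis quandleE e connE)).
by rewrite p'natE // p_dvd.
Qed.
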